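(* Let $\mathbb{Q}^*_+$ act on the ring $\mathcal{A}_f$ of finite adeles by division, $r\cdot a=r^{-1}a$, and let $\mathcal{Q}(\mathcal{A}_f/\mathbb{Q}^*_+)$ be the quasi-orbit space of this action. For each $a\in\mathcal{A}_f$ define $S(a):=\{p\in\mathcal{P}: a_p=0\}$. Then $S(a)$ depends only on the quasi-orbit of $a$, and the map $a\mapsto S(a)$ induces a homeomorphism of $\mathcal{Q}(\mathcal{A}_f/\mathbb{Q}^*_+)$ onto the power set $2^{\mathcal{P}}$ equipped with the power-cofinite topology.
   Context: $\mathcal{P}$ is the set of prime numbers; $\mathcal{A}_f=\{(a_p)\in\prod_p\mathbb{Q}_p: a_p\in\mathbb{Z}_p \text{ for almost all } p\}$ is the ring of finite adeles with the restricted product topology (neighbourhood base at $0$ given by $\prod_{p\in F}V_p\times\prod_{p\notin F}\mathbb{Z}_p$, $F$ finite, $V_p$ a neighbourhood of $0$ in $\mathbb{Q}_p$), and $\mathbb{Q}$ is diagonally embedded. For a group $G$ acting on a space $X$, the quasi-orbit space $\mathcal{Q}(X/G)$ is the quotient of $X$ by the relation $x\sim y \iff \overline{G\cdot x}=\overline{G\cdot y}$, with the quotient topology. The power-cofinite topology on $2^{\mathcal{P}}$ has as basic open sets $U_G=\{T\subseteq\mathcal{P}: T\cap G=\emptyset\}$ for $G$ ranging over finite subsets of $\mathcal{P}$. *)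

From mathcomp Require Import all_boot all_order all_algebra.
From mathcomp Require Import boolp classical_sets cardinality.
Set Implicit Arguments. Unset Strict Implicit. Unset Printing Implicit Defensive.
Import Order.TTheory GRing.Theory Num.Theory.
Local Open Scope classical_set_scope.
Local Open Scope ring_scope.

Definition vp (p : nat) (q : rat) : int :=
  (logn p `|numq q|%N)%:Z - (logn p `|denq q|%N)%:Z.

(* [pclose p k q] : q lies in p^k Z_(p), i.e. |q|_p <= p^-k. *)
Definition pclose (p : nat) (k : int) (q : rat) : Prop := q = 0 \/ k <= vp p q.

Definition padic_cauchy (p : nat) (x : nat -> rat) : Prop :=
  forall k : int, exists N : nat, forall m n : nat, (N <= m)%N -> (N <= n)%N ->
    pclose p k (x m - x n).

Definition padic_null (p : nat) (x : nat -> rat) : Prop :=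
  forall k : int, exists N : nat, forall n : nat, (N <= n)%N -> pclose p k (x n).

Definition padic_equiv (p : nat) (x y : nat -> rat) : Prop :=
  padic_null p (fun n => x n - y n).

(* Q_p: equivalence classes of p-adic Cauchy sequences of rationals. *)
Record Qp (p : nat) := MkQp {
  Qp_set : set (nat -> rat);
  Qp_ax : exists x, padic_cauchy p x /\
            Qp_set = [set y | padic_cauchy p y /\ padic_equiv p x y] }.

Lemma pcloseN (p : nat) (k : int) (q : rat) : pclose p k (- q) <-> pclose p k q.
Proof.
rewrite /pclose /vp numqN denqN abszN.
by split => -[h|h]; [left; rewrite -[q]opprK h oppr0|right|left; rewrite h oppr0|right].
Qed.

Lemma Qp0_ax (p : nat) : exists x, padic_cauchy p x /\
  [set y | padic_cauchy p y /\ padic_null p y] =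
  [set y | padic_cauchy p y /\ padic_equiv p x y].
Proof.
exists (fun _ => 0); split.
  by move=> k; exists 0%N => m n _ _; left; rewrite subr0.
apply/seteqP; split => y [cy ny]; split => // k; have [N HN] := ny k;
  exists N => n /HN; rewrite ?sub0r pcloseN //.
Qed.

Definition Qp0 (p : nat) : Qp p := MkQp (Qp0_ax p).

(* [Qp_near p k a b] : b - a belongs to p^k Z_p *)
Definition Qp_near (p : nat) (k : int) (a b : Qp p) : Prop :=
  exists x y, Qp_set a x /\ Qp_set b y /\
    exists N : nat, forall n : nat, (N <= n)%N -> pclose p k (y n - x n).

Definition Qp_int (p : nat) (a : Qp p) : Prop := Qp_near 0 (Qp0 p) a.

Definition Qp_scale_rel (p : nat) (q : rat) (a b : Qp p) : Prop :=
  exists x y, Qp_set a x /\ Qp_set b y /\ padic_equiv p (fun n => q * x n) y.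

Definition prime_t := {p : nat | prime p}.

(* restricted product of the Q_p with respect to the Z_p *)
Record Af := MkAf {
  af_comp : forall p : prime_t, Qp (val p);
  af_restr : finite_set [set p : prime_t | ~ Qp_int (af_comp p)] }.

(* basic neighbourhood a + (prod_{p in F} p^{k p} Z_p x prod_{p notin F} Z_p) *)
Definition af_basic_nbhd (a : Af) (F : set prime_t) (k : prime_t -> int) : set Af :=
  [set b | forall p : prime_t,
     (F p -> Qp_near (k p) (af_comp a p) (af_comp b p)) /\
     (~ F p -> Qp_near 0 (af_comp a p) (af_comp b p))].

Definition af_open (O : set Af) : Prop :=
  forall a, O a -> exists F k, finite_set F /\ af_basic_nbhd a F k `<=` O.

Definition af_closure (X : set Af) : set Af :=
  [set b | forall O, af_open O -> O b -> exists c, O c /\ X c].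

Definition af_orbit (a : Af) : set Af :=
  [set b | exists r : rat, 0 < r /\
     forall p : prime_t, Qp_scale_rel r^-1 (af_comp a p) (af_comp b p)].

Definition quasi_orbit_rel (a b : Af) : Prop :=
  af_closure (af_orbit a) = af_closure (af_orbit b).

(* quasi-orbit space: equivalence classes, with the quotient topology *)
Record QOS := MkQOS {
  qos_set : set Af;
  qos_ax : exists a, qos_set = [set b | quasi_orbit_rel a b] }.

Definition qclass (a : Af) : QOS :=
  @MkQOS [set b | quasi_orbit_rel a b] (ex_intro _ a erefl).

Definition qos_open (U : set QOS) : Prop := af_open [set a | U (qclass a)].

Definition zero_set (a : Af) : set prime_t := [set p | af_comp a p = Qp0 (val p)].

Definition pc_open (V : set (set prime_t)) : Prop :=
  forall T, V T -> exists G : set prime_t, finite_set G /\ T `&` G = set0 /\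
    (forall T', T' `&` G = set0 -> V T').

(* The closure of the orbit of [a] is [{c | S(a) is contained in S(c)}].
   Scaling keeps zero components zero and [c_p = 0] is a closed condition,
   which gives one inclusion.  Conversely, a basic neighbourhood of [c]
   constrains only finitely many primes; at those with [a_p <> 0] the scalar
   [q] need only be [p]-adically close to a ratio of representatives of [c_p]
   and [a_p], at those with [a_p = 0] also [c_p = 0], and at every other prime
   [q] must be [p]-integral.  Weak approximation in [Q] (Bezout at one prime,
   then induction over the finite set) provides such a positive [q].  Hence
   [a ~ b <-> S(a) = S(b)], and [S] descends to a bijection of the quasi-orbit
   space onto [2^P].  It is continuous because [a_p <> 0] is an open
   condition, and open because near [a] one may set to [0] every component
   outside the finite set of primes where the neighbourhood, or the
   non-integrality of [a_p], forbids it. *)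

From mathcomp Require Import all_boot all_order all_algebra.
From mathcomp Require Import boolp classical_sets cardinality.
From mathcomp Require Import zify ring lra.
Set Implicit Arguments. Unset Strict Implicit. Unset Printing Implicit Defensive.
Import Order.TTheory GRing.Theory Num.Theory.
Local Open Scope classical_set_scope.
Local Open Scope ring_scope.

Section Valuation.
Variable p : nat.

Lemma vp_frac (n d : int) : n != 0 -> d != 0 ->
  vp p (n%:~R / d%:~R) = (logn p `|n|)%:Z - (logn p `|d|)%:Z.
Proof.
move=> n0 d0; rewrite /vp; set r := _ / _.
have e : numq r * d = n * denq r.
  apply: (@intr_inj rat); rewrite !intrM numqE /r.
  by rewrite mulrAC divfK ?intr_eq0 // mulrC.
have := congr1 (fun z : int => logn p `|z|) e => /=.
rewrite !abszM !lognM ?absz_gt0 ?denq_neq0 // ?numq_eq0 /r ?mulf_neq0 ?invr_eq0 ?intr_eq0 //.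
lia.
Qed.

Lemma vp_intr (n : int) : vp p n%:~R = (logn p `|n|)%:Z.
Proof. by rewrite /vp numq_int denq_int /= logn1 subr0. Qed.

Lemma vp0 : vp p 0 = 0.
Proof. by have := vp_intr 0; rewrite mulr0z /= logn0. Qed.

Lemma vpM (a b : rat) : a != 0 -> b != 0 -> vp p (a * b) = vp p a + vp p b.
Proof.
move=> a0 b0; have na : numq a != 0 by rewrite numq_eq0.
have nb : numq b != 0 by rewrite numq_eq0.
rewrite -[a]divq_num_den -[b]divq_num_den mulf_div -!intrM.
rewrite !vp_frac ?mulf_neq0 ?denq_neq0 // !abszM !lognM ?absz_gt0 ?denq_neq0 //.
lia.
Qed.

Lemma vpV (a : rat) : vp p a^-1 = - vp p a.
Proof.
have [->|a0] := eqVneq a 0; first by rewrite invr0 vp0 oppr0.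
have na : numq a != 0 by rewrite numq_eq0.
rewrite -[a]divq_num_den invf_div !vp_frac ?denq_neq0 //; lia.
Qed.

Lemma pclose_vp (q : rat) : pclose p (vp p q) q.
Proof. by right. Qed.

Lemma pclose_le (k k' : int) (q : rat) : k' <= k -> pclose p k q -> pclose p k' q.
Proof. by move=> le [->|h]; [left|right; apply: le_trans h]. Qed.

Lemma vp_ge_pclose (k : int) (q : rat) : q != 0 -> pclose p k q -> k <= vp p q.
Proof. by move=> q0 [h|//]; rewrite h eqxx in q0. Qed.

Hypothesis pp : prime p.

Lemma prime_natr_neq0 : p%:R != 0 :> rat.
Proof. by rewrite pnatr_eq0 -lt0n prime_gt0. Qed.

Lemma vp_prime_expz (k : int) : vp p (p%:R ^ k) = k.
Proof.
case: k => n; rewrite ?NegzE -?exprnN ?vpV -?exprnP -natrX pmulrn vp_intr /= pfactorK //.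
Qed.

Lemma pclose0_frac (n : int) (d : nat) : ~~ (p %| d)%N -> pclose p 0 (n%:~R / d%:R).
Proof.
move=> nd; have [->|n0] := eqVneq n 0; first by rewrite mul0r; left.
have d0 : (d != 0)%N by apply: contraNneq nd => ->; rewrite dvdn0.
right; rewrite -[d%:R]/((d%:Z)%:~R) vp_frac //=.
by rewrite [logn p d]logn_coprime ?prime_coprime // subr0.
Qed.

Lemma pclose0_intr (n : int) : pclose p 0 n%:~R.
Proof.
have := @pclose0_frac n 1; rewrite divr1; apply.
by rewrite dvdn1; apply: contraTneq pp => ->.
Qed.

Lemma pclose0P (q : rat) : pclose p 0 q <->
  exists (n : int) (d : nat), ~~ (p %| d)%N /\ q = n%:~R / d%:R.
Proof.
split=> [[->|h]|[n [d [nd ->]]]]; last exact: pclose0_frac.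
  exists 0, 1%N; rewrite mul0r dvdn1; split=> //.
  by apply: contraTneq pp => ->.
exists (numq q), `|denq q|%N; split; last first.
  by rewrite pmulrn abszE ger0_norm ?divq_num_den // ltW // denq_gt0.
apply/negP => pd.
have pn : ~~ (p %| `|numq q|)%N.
  apply/negP => pn; have /eqP g := coprime_num_den q.
  have : (p %| gcdn `|numq q| `|denq q|)%N by rewrite dvdn_gcd pn pd.
  by rewrite g dvdn1; apply/negP; apply: contraTneq pp => ->.
move: h; rewrite /vp logn_coprime ?prime_coprime //.
have : (0 < logn p `|denq q|)%N.
  by rewrite -pfactor_dvdn // ?expn1 // absz_gt0 denq_neq0.
lia.
Qed.

Lemma pclose0_add (a b : rat) : pclose p 0 a -> pclose p 0 b -> pclose p 0 (a + b).
Proof.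
move=> /pclose0P[n1 [d1 [h1 ->]]] /pclose0P[n2 [d2 [h2 ->]]].
have d10 : d1%:R != 0 :> rat by rewrite pnatr_eq0; apply: contraNneq h1 => ->.
have d20 : d2%:R != 0 :> rat by rewrite pnatr_eq0; apply: contraNneq h2 => ->.
rewrite addf_div // -natrM.
have -> : n1%:~R * d2%:R + n2%:~R * d1%:R = (n1 * d2%:Z + n2 * d1%:Z)%:~R :> rat.
  by rewrite intrD !intrM.
by apply: pclose0_frac; rewrite Euclid_dvdM // negb_or h1 h2.
Qed.

Lemma pclose0_mul (a b : rat) : pclose p 0 a -> pclose p 0 b -> pclose p 0 (a * b).
Proof.
move=> /pclose0P[n1 [d1 [h1 ->]]] /pclose0P[n2 [d2 [h2 ->]]].
rewrite mulf_div -natrM -intrM.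
by apply: pclose0_frac; rewrite Euclid_dvdM // negb_or h1 h2.
Qed.

Lemma pclose_shift (k : int) (q : rat) : pclose p k q <-> pclose p 0 (q / p%:R ^ k).
Proof.
have pk0 : p%:R ^ k != 0 :> rat by rewrite expfz_neq0 // prime_natr_neq0.
have [->|q0] := eqVneq q 0; first by rewrite mul0r; split; left.
have qk0 : q / p%:R ^ k != 0 by rewrite mulf_neq0 ?invr_eq0.
rewrite /pclose vpM ?invr_eq0 // vpV vp_prime_expz subr_ge0.
by split=> -[/eqP|]; rewrite ?(negPf q0) ?(negPf qk0) //; right.
Qed.

Lemma pclose_add (k : int) (a b : rat) :
  pclose p k a -> pclose p k b -> pclose p k (a + b).
Proof. by rewrite !(pclose_shift k) mulrDl; apply: pclose0_add. Qed.

Lemma pclose_sub (k : int) (a b : rat) :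
  pclose p k a -> pclose p k b -> pclose p k (a - b).
Proof. by move=> ha hb; apply: pclose_add => //; apply/pcloseN. Qed.

Lemma pclose_mul (k1 k2 : int) (a b : rat) :
  pclose p k1 a -> pclose p k2 b -> pclose p (k1 + k2) (a * b).
Proof.
move=> /pclose_shift ha /pclose_shift hb; apply/pclose_shift.
by rewrite expfzDr ?prime_natr_neq0 // invfM mulrACA; apply: pclose0_mul.
Qed.

Lemma pclose_prime_expz (k : int) : pclose p k (p%:R ^ k).
Proof. by right; rewrite vp_prime_expz. Qed.

Lemma pclose0_prime_expn (n : nat) : pclose p 0 (p%:R ^+ n).
Proof. by rewrite -natrX pmulrn; apply: pclose0_intr. Qed.

Lemma pclose_dvdn (k n : nat) : (p ^ k %| n)%N -> pclose p k n%:R.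
Proof.
move=> dk; have [->|n0] := eqVneq n 0%N; first by left.
right; rewrite pmulrn vp_intr /=; rewrite pfactor_dvdn ?lt0n // in dk; lia.
Qed.

Lemma vp_addr_small (a d : rat) : a != 0 -> pclose p (vp p a + 1) d ->
  a + d != 0 /\ vp p (a + d) = vp p a.
Proof.
move=> a0 hd.
have na : ~ pclose p (vp p a + 1) a.
  by case=> [/eqP|]; rewrite ?(negPf a0) // lezD1 ltxx.
have ad0 : a + d != 0.
  apply/eqP => e; have ad : a = - d by apply/eqP; rewrite -addr_eq0 e.
  by apply: na; rewrite {2}ad; apply/pcloseN.
split=> //; apply/eqP; rewrite eq_le; apply/andP; split.
  rewrite leNgt; apply/negP => lt; apply: na.
  rewrite -{2}(addrK d a); apply: pclose_sub => //.
  by right; rewrite lezD1.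
apply: vp_ge_pclose => //; apply: pclose_add; first exact: pclose_vp.
by apply: pclose_le hd; rewrite lerDl.
Qed.

End Valuation.

Lemma approx_at_prime (p : nat) (w : rat) (m : int) : prime p ->
  exists s : rat, pclose p m (s - w) /\ (forall l, prime l -> l != p -> pclose l 0 s).
Proof.
move=> pp; have d0 : (0 < `|denq w|)%N by rewrite absz_gt0 denq_neq0.
have [d' cd' dE] := pfactor_coprime pp d0; set e := logn p _ in dE.
set G := (`|m| + e)%N.
have [u [v uv]] := Bezoutz d'%:Z (p ^ G)%:Z.
have /eqP g1 : coprime d' (p ^ G) by rewrite coprimeXr // coprime_sym.
rewrite /gcdz /= g1 in uv.
have d'0 : d'%:R != 0 :> rat.
  by rewrite pnatr_eq0; apply: contraTneq d0 => d'0; rewrite dE d'0.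
have p0 := prime_natr_neq0 pp.
have wE : w = (numq w)%:~R / (d'%:R * p%:R ^+ e).
  by rewrite -[LHS]divq_num_den -natrX -natrM -dE pmulrn abszE ger0_norm.
have uvq : u%:~R * d'%:R + v%:~R * p%:R ^+ G = 1 :> rat.
  have := congr1 (fun z : int => z%:~R : rat) uv => /=.
  by rewrite intrD !intrM -natrX !pmulrn.
have uE : u%:~R = (1 - v%:~R * p%:R ^+ G) / d'%:R :> rat.
  by rewrite -[X in (X - _) / _]uvq addrK mulfK.
set n := numq w in wE *; exists ((n * u)%:~R / p%:R ^+ e); split.
  (* Bezout [u d' + v p^G = 1] makes [s - w] a multiple of [p^(G - e)]. *)
  have -> : (n * u)%:~R / p%:R ^+ e - w =
      ((- (n * v))%:~R / d'%:R) * (p%:R ^+ G / p%:R ^+ e).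
    rewrite [in LHS]wE intrM uE intrN intrM.
    by field; rewrite d'0 expf_neq0.
  have -> : p%:R ^+ G / p%:R ^+ e = p%:R ^ (G%:Z - e%:Z) :> rat.
    by rewrite expfzDr // -exprnN.
  apply: (pclose_le (k := 0 + (G%:Z - e%:Z))); first by lia.
  apply: pclose_mul => //; last exact: pclose_prime_expz.
  by apply: pclose0_frac => //; rewrite -prime_coprime.
move=> l pl lp; rewrite -natrX; apply: pclose0_frac => //.
by rewrite Euclid_dvdX // dvdn_prime2 // (negPf lp).
Qed.

Definition pow_prod (L : seq nat) (M : nat -> int) : nat :=
  (\prod_(p <- L) p ^ `|M p|)%N.

Lemma dvdn_pow_prod (L : seq nat) (M : nat -> int) (p : nat) :
  p \in L -> (p ^ `|M p| %| pow_prod L M)%N.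
Proof. by move=> pL; rewrite /pow_prod (big_rem _ pL) /= dvdn_mulr. Qed.

Lemma pow_prod_gt0 (L : seq nat) (M : nat -> int) : all prime L -> (0 < pow_prod L M)%N.
Proof.
move=> /allP aL; rewrite /pow_prod big_seq; apply: prodn_cond_gt0 => i /aL pi.
by rewrite expn_gt0 prime_gt0.
Qed.

Lemma weak_approx (L : seq nat) (t : nat -> rat) (M : nat -> int) :
  all prime L -> uniq L ->
  exists q : rat, (forall p, p \in L -> pclose p (M p) (q - t p)) /\
     (forall l, prime l -> l \notin L -> pclose l 0 q).
Proof.
elim: L => [|p0 L IH] /=; first by exists 0; split=> // l _ _; left.
move=> /andP[pp0 aL] /andP[p0L uL]; have [q [qL qnotL]] := IH aL uL.
set Pi := pow_prod L M.
have Pi0 : Pi%:R != 0 :> rat by rewrite pnatr_eq0 -lt0n pow_prod_gt0.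
(* Correct [q] at [p0] by a multiple of [Pi], which is small at every prime of [L]. *)
have [s [sp0 snotp0]] := approx_at_prime ((t p0 - q) / Pi%:R) (M p0) pp0.
have Pi_int l : prime l -> pclose l 0 Pi%:R by move=> pl; rewrite pmulrn; apply: pclose0_intr.
exists (q + Pi%:R * s); split=> [p|l pl].
  rewrite inE => /orP[/eqP ->|pL].
    have -> : q + Pi%:R * s - t p0 = Pi%:R * (s - (t p0 - q) / Pi%:R) by field.
    by rewrite -[M p0]add0r; apply: pclose_mul => //; apply: Pi_int.
  have pp : prime p by move/allP: aL => /(_ _ pL).
  have -> : q + Pi%:R * s - t p = (q - t p) + Pi%:R * s by ring.
  apply: pclose_add => //; first exact: qL.
  apply: (pclose_le (k := `|M p|%:Z + 0)); first by lia.
  apply: pclose_mul => //; first by apply: pclose_dvdn => //; apply: dvdn_pow_prod.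
  by apply: snotp0 => //; apply: contraNneq p0L => <-.
rewrite inE negb_or => /andP[lp0 lL].
apply: pclose0_add => //; first exact: qnotL.
by rewrite -[0]addr0; apply: pclose_mul => //; [apply: Pi_int | apply: snotp0].
Qed.

Lemma weak_approx_pos (L : seq nat) (t : nat -> rat) (M : nat -> int) :
  all prime L -> uniq L ->
  exists q : rat, 0 < q /\ (forall p, p \in L -> pclose p (M p) (q - t p)) /\
     (forall l, prime l -> l \notin L -> pclose l 0 q).
Proof.
move=> aL uL; have [q [qL qnotL]] := weak_approx t M aL uL.
(* [j] exceeds [|q|] and is divisible by every [p ^ |M p|], [p] in [L]. *)
set j := (`|numq q|.+1 * pow_prod L M)%N.
exists (q + j%:R); split; [|split].
- have h1 : `|q| <= (`|numq q|%N)%:R.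
    rewrite natr_absz intr_norm numqE normrM ler_peMr //.
    rewrite gtr0_norm ?ltr0z ?denq_gt0 // ler1z; have := denq_gt0 q; lia.
  have h2 : (`|numq q|.+1)%:R <= j%:R :> rat.
    by rewrite ler_nat /j leq_pmulr // pow_prod_gt0.
  have h3 : - `|q| <= q by apply: lerNnormlW.
  rewrite -addn1 natrD in h2; lra.
- move=> p pL; have pp : prime p by move/allP: aL => /(_ _ pL).
  have -> : q + j%:R - t p = (q - t p) + j%:R by ring.
  apply: pclose_add => //; first exact: qL.
  apply: (pclose_le (k := `|M p|%:Z)); first by lia.
  by apply: pclose_dvdn => //; rewrite /j dvdn_mull // dvdn_pow_prod.
- move=> l pl lL; apply: pclose0_add => //; first exact: qnotL.
  by rewrite pmulrn; apply: pclose0_intr.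
Qed.

Definition ev_close (p : nat) (k : int) (z : nat -> rat) : Prop :=
  exists N, forall n, (N <= n)%N -> pclose p k (z n).

Section PadicSequences.
Variable p : nat.
Hypothesis pp : prime p.
Implicit Types (x y z : nat -> rat) (k : int).

Lemma ev_close_ext k z1 z2 : (forall n, z1 n = z2 n) -> ev_close p k z1 -> ev_close p k z2.
Proof. by move=> e [N h]; exists N => n /h; rewrite e. Qed.

Lemma ev_close_add k z1 z2 :
  ev_close p k z1 -> ev_close p k z2 -> ev_close p k (fun n => z1 n + z2 n).
Proof.
move=> [N1 h1] [N2 h2]; exists (maxn N1 N2) => n hn.
by apply: pclose_add => //; [apply: h1 | apply: h2]; lia.
Qed.

Lemma ev_close_opp k z : ev_close p k z -> ev_close p k (fun n => - z n).
Proof. by move=> [N h]; exists N => n /h /pcloseN. Qed.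

Lemma ev_close_sub k z1 z2 :
  ev_close p k z1 -> ev_close p k z2 -> ev_close p k (fun n => z1 n - z2 n).
Proof. by move=> h1 h2; apply: ev_close_add => //; apply: ev_close_opp. Qed.

Lemma ev_close_le k k' z : k' <= k -> ev_close p k z -> ev_close p k' z.
Proof. by move=> le [N h]; exists N => n /h; apply: pclose_le. Qed.

Lemma ev_close_scale k K c z :
  pclose p K c -> ev_close p k z -> ev_close p (K + k) (fun n => c * z n).
Proof. by move=> hc [N h]; exists N => n /h; apply: pclose_mul. Qed.

Lemma padic_null_ext z1 z2 : (forall n, z1 n = z2 n) -> padic_null p z1 -> padic_null p z2.
Proof. by move=> e h k; apply: ev_close_ext (h k). Qed.

Lemma padic_null_scale c z : padic_null p z -> padic_null p (fun n => c * z n).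
Proof.
move=> h k; have := ev_close_scale (pclose_vp p c) (h (k - vp p c)).
by apply: ev_close_le; rewrite addrC subrK.
Qed.

Lemma padic_null0 : padic_null p (fun _ => 0).
Proof. by move=> k; exists 0%N => n _; left. Qed.

Lemma padic_equiv_refl x : padic_equiv p x x.
Proof. by apply: padic_null_ext padic_null0 => n; rewrite subrr. Qed.

Lemma padic_equiv_sym x y : padic_equiv p x y -> padic_equiv p y x.
Proof. by move=> h k; apply: ev_close_ext (ev_close_opp (h k)) => n; rewrite opprB. Qed.

Lemma padic_equiv_trans x y z :
  padic_equiv p x y -> padic_equiv p y z -> padic_equiv p x z.
Proof. by move=> h1 h2 k; apply: ev_close_ext (ev_close_add (h1 k) (h2 k)) => n; ring. Qed.

Lemma padic_null_equiv x y : padic_equiv p x y -> padic_null p x -> padic_null p y.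
Proof. by move=> h1 h2 k; apply: ev_close_ext (ev_close_sub (h2 k) (h1 k)) => n; ring. Qed.

Lemma padic_cauchy_const c : padic_cauchy p (fun _ => c).
Proof. by move=> k; exists 0%N => m n _ _; left; rewrite subrr. Qed.

Lemma padic_cauchy_scale c x : padic_cauchy p x -> padic_cauchy p (fun n => c * x n).
Proof.
move=> h k; have [N hN] := h (k - vp p c); exists N => m n hm hn.
rewrite -mulrBr; have := pclose_mul pp (pclose_vp p c) (hN m n hm hn).
by apply: pclose_le; rewrite addrC subrK.
Qed.

Lemma padic_cauchy_bounded x : padic_cauchy p x -> exists B, ev_close p B x.
Proof.
move=> h; have [N hN] := h 0; exists (- `|vp p (x N)|); exists N => n hn.
have -> : x n = (x n - x N) + x N by ring.
apply: pclose_add => //; first by apply: pclose_le (hN n N hn (leqnn N)); lia.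
by apply: pclose_le (pclose_vp p (x N)); lia.
Qed.

Lemma padic_cauchy_vp_stable x : padic_cauchy p x -> ~ padic_null p x ->
  exists v N, forall n, (N <= n)%N -> x n != 0 /\ vp p (x n) = v.
Proof.
move=> cx nx; have [k0 nk0] : exists k0, ~ ev_close p k0 x.
  by apply: contrapT => H; apply: nx => k; apply: contrapT => h; apply: H; exists k.
have [N hN] := cx k0.
have [n0 [Nn0 nc]] : exists n0, (N <= n0)%N /\ ~ pclose p k0 (x n0).
  by apply: contrapT => H; apply: nk0; exists N => n hn; apply: contrapT => h; apply: H; exists n.
have x0 : x n0 != 0 by apply/negP => /eqP e; apply: nc; left.
have lt : vp p (x n0) < k0 by rewrite ltNge; apply/negP => h; apply: nc; right.
exists (vp p (x n0)), N => n hn.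
have := @vp_addr_small p pp (x n0) (x n - x n0) x0; rewrite (addrC (x n0)) subrK; apply.
by apply: pclose_le (hN n n0 hn Nn0); rewrite lezD1.
Qed.

End PadicSequences.

Section PadicNumbers.
Variable p : nat.
Hypothesis pp : prime p.
Implicit Types (a b c : Qp p) (x y : nat -> rat) (k : int).

Lemma Qp_ext a b : Qp_set a = Qp_set b -> a = b.
Proof.
case: a b => [sa ha] [sb hb] /= e; subst sb.
by congr MkQp; apply: Prop_irrelevance.
Qed.

Lemma Qp_setP a x : Qp_set a x ->
  forall y, Qp_set a y <-> padic_cauchy p y /\ padic_equiv p x y.
Proof.
case: a => sa [x0 [_ e]] /=; rewrite e => -[_ ex] y.
split=> -[cy ey]; split=> //; last exact: padic_equiv_trans ex ey.
exact: padic_equiv_trans (padic_equiv_sym ex) ey.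
Qed.

Lemma Qp_set_cauchy a x : Qp_set a x -> padic_cauchy p x.
Proof. by move=> hx; have /(Qp_setP hx) [] := hx. Qed.

Lemma Qp_set_equiv a x y : Qp_set a x -> Qp_set a y -> padic_equiv p x y.
Proof. by move=> hx /(Qp_setP hx) []. Qed.

Lemma Qp_set_ex a : exists x, Qp_set a x.
Proof.
case: a => sa [x [cx e]] /=; rewrite e.
by exists x; split=> //; apply: padic_equiv_refl.
Qed.

Lemma eq_Qp a b x y : Qp_set a x -> Qp_set b y -> padic_equiv p x y -> a = b.
Proof.
move=> hx hy e; apply: Qp_ext; apply/seteqP; split=> z.
  move=> /(Qp_setP hx) [cz ez]; apply/(Qp_setP hy); split=> //.
  exact: padic_equiv_trans (padic_equiv_sym e) ez.
move=> /(Qp_setP hy) [cz ez]; apply/(Qp_setP hx); split=> //.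
exact: padic_equiv_trans e ez.
Qed.

Lemma Qp0_set : Qp_set (Qp0 p) (fun _ => 0).
Proof. by split; [apply: padic_cauchy_const | apply: padic_null0]. Qed.

Lemma Qp_eq0P a x : Qp_set a x -> a = Qp0 p <-> padic_null p x.
Proof.
move=> hx; split=> [ea | nx]; first by move: hx; rewrite ea => -[].
by apply: (eq_Qp hx Qp0_set); apply: padic_null_ext nx => n; rewrite subr0.
Qed.

Lemma Qp_nearP k a b x y : Qp_set a x -> Qp_set b y ->
  Qp_near k a b <-> ev_close p k (fun n => y n - x n).
Proof.
move=> hx hy; split; last by move=> [N h]; exists x, y; do 2!split=> //; exists N.
move=> [x' [y' [hx' [hy' near']]]].
have := ev_close_add pp near'
  (ev_close_sub pp (Qp_set_equiv hy hy' k) (Qp_set_equiv hx hx' k)).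
by apply: ev_close_ext => n; ring.
Qed.

Lemma Qp_near_refl k a : Qp_near k a a.
Proof.
have [x hx] := Qp_set_ex a; apply/(Qp_nearP _ hx hx).
by exists 0%N => n _; rewrite subrr; left.
Qed.

Lemma Qp_near_sym k a b : Qp_near k a b -> Qp_near k b a.
Proof.
have [x hx] := Qp_set_ex a; have [y hy] := Qp_set_ex b.
rewrite (Qp_nearP _ hx hy) (Qp_nearP _ hy hx) => h.
by apply: ev_close_ext (ev_close_opp h) => n; rewrite opprB.
Qed.

Lemma Qp_near_trans k a b c : Qp_near k a b -> Qp_near k b c -> Qp_near k a c.
Proof.
have [x hx] := Qp_set_ex a; have [y hy] := Qp_set_ex b; have [z hz] := Qp_set_ex c.
rewrite (Qp_nearP _ hx hy) (Qp_nearP _ hy hz) (Qp_nearP _ hx hz) => h1 h2.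
by apply: ev_close_ext (ev_close_add pp h2 h1) => n; ring.
Qed.

Lemma Qp_intP a x : Qp_set a x -> Qp_int a <-> ev_close p 0 x.
Proof.
move=> hx; rewrite /Qp_int (Qp_nearP _ Qp0_set hx).
by split; apply: ev_close_ext => n; rewrite subr0.
Qed.

Lemma Qp_int0 : Qp_int (Qp0 p).
Proof. exact: Qp_near_refl. Qed.

Lemma Qp_neq0_nbhd a : a <> Qp0 p -> exists k, forall b, Qp_near k a b -> b <> Qp0 p.
Proof.
have [x hx] := Qp_set_ex a.
move=> a0; apply: contrapT => nsep; apply/a0/(Qp_eq0P hx) => k.
have /(Qp_nearP _ hx Qp0_set) /ev_close_opp : Qp_near k a (Qp0 p).
  by apply: contrapT => nk; apply: nsep; exists k => b hb eb; apply: nk; rewrite -eb.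
by apply: ev_close_ext => n; rewrite sub0r opprK.
Qed.

Definition Qp_of_seq x (cx : padic_cauchy p x) : Qp p :=
  @MkQp p [set y | padic_cauchy p y /\ padic_equiv p x y] (ex_intro _ x (conj cx erefl)).

Lemma Qp_of_seq_set x (cx : padic_cauchy p x) : Qp_set (Qp_of_seq cx) x.
Proof. by split=> //; apply: padic_equiv_refl. Qed.

Definition Qp_repr a : nat -> rat := projT1 (cid (Qp_set_ex a)).

Lemma Qp_repr_set a : Qp_set a (Qp_repr a).
Proof. exact: projT2 (cid (Qp_set_ex a)). Qed.

Definition Qp_scale (q : rat) a : Qp p :=
  Qp_of_seq (padic_cauchy_scale pp q (Qp_set_cauchy (Qp_repr_set a))).

Lemma Qp_scale_set q a x : Qp_set a x -> Qp_set (Qp_scale q a) (fun n => q * x n).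
Proof.
move=> hx; apply/(Qp_setP (Qp_of_seq_set _)); split.
  exact: padic_cauchy_scale (Qp_set_cauchy hx).
have := padic_null_scale pp q (Qp_set_equiv (Qp_repr_set a) hx).
by apply: padic_null_ext => n /=; ring.
Qed.

Lemma Qp_scale_relE q a : Qp_scale_rel q a (Qp_scale q a).
Proof.
exists (Qp_repr a), (fun n => q * Qp_repr a n); split; first exact: Qp_repr_set.
by split; [apply: Qp_scale_set (Qp_repr_set a) | apply: padic_equiv_refl].
Qed.

Lemma Qp_scale_rel0 q b : Qp_scale_rel q (Qp0 p) b -> b = Qp0 p.
Proof.
move=> [x [y [[_ x0] [hy e]]]]; apply/(Qp_eq0P hy).
exact: padic_null_equiv e (padic_null_scale pp q x0).
Qed.

Lemma Qp_scale0 q : Qp_scale q (Qp0 p) = Qp0 p.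
Proof. exact/Qp_scale_rel0/Qp_scale_relE. Qed.

Lemma Qp_int_scale q a : pclose p 0 q -> Qp_int a -> Qp_int (Qp_scale q a).
Proof.
have [x hx] := Qp_set_ex a => hq /(Qp_intP hx) ax.
apply/(Qp_intP (Qp_scale_set q hx)).
by have := ev_close_scale pp hq ax; rewrite add0r.
Qed.

Definition Qp_const (c : rat) : Qp p := Qp_of_seq (padic_cauchy_const p c).

Lemma Qp_const_set (c : rat) : Qp_set (Qp_const c) (fun _ => c).
Proof. exact: Qp_of_seq_set. Qed.

Lemma Qp_const_neq0 (c : rat) : c != 0 -> Qp_const c <> Qp0 p.
Proof.
move=> c0 /(Qp_eq0P (Qp_const_set c)) /(_ (vp p c + 1)) [N /(_ N (leqnn N))].
by case=> [/eqP|]; rewrite ?(negPf c0) // lezD1 ltxx.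
Qed.

Lemma Qp_near0_const k (c : rat) : pclose p k c -> Qp_near k (Qp0 p) (Qp_const c).
Proof.
move=> h; apply/(Qp_nearP _ Qp0_set (Qp_const_set c)).
by exists 0%N => n _; rewrite subr0.
Qed.

Lemma Qp_int_const (c : rat) : pclose p 0 c -> Qp_int (Qp_const c).
Proof. exact: Qp_near0_const. Qed.

Lemma Qp_scale_approx a c (K : int) : a <> Qp0 p ->
  exists (t : rat) (M : int), forall q, pclose p M (q - t) -> Qp_near K c (Qp_scale q a).
Proof.
move=> a0; have [x hx] := Qp_set_ex a; have [y hy] := Qp_set_ex c.
have cx := Qp_set_cauchy hx; have cy := Qp_set_cauchy hy.
have nx : ~ padic_null p x by move/(Qp_eq0P hx).
have [v [N0 hv]] := padic_cauchy_vp_stable pp cx nx.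
have [B [N1 hB]] := padic_cauchy_bounded pp cy.
have [N2 hN2] := cx (K - B + v).
have [N3 hN3] := cy K.
set N := maxn (maxn N0 N1) (maxn N2 N3).
have [xN0 vN] := hv N (leq_trans (leq_maxl _ _) (leq_maxl _ _)).
(* As [vp p (x n)] is eventually constant, [q x_n] is close to [y_n] once [q]
   is close to [y_N / x_N]. *)
exists (y N / x N), (K - v) => q hq.
apply/(Qp_nearP K hy (Qp_scale_set q hx)); exists N => n hn.
have [xn0 vn] := hv n (leq_trans (leq_trans (leq_maxl _ _) (leq_maxl _ _)) hn).
have -> : q * x n - y n =
    (q - y N / x N) * x n + (y N * (x N)^-1) * (x n - x N) + (y N - y n) by field.
apply: pclose_add => //; [apply: pclose_add => // |].
- have := pclose_mul pp hq (pclose_vp p (x n)); rewrite vn.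
  by apply: pclose_le; lia.
- have h1 : pclose p B (y N) by apply: hB; lia.
  have h2 : pclose p (- v) ((x N)^-1) by right; rewrite vpV vN.
  have h3 : pclose p (K - B + v) (x n - x N) by apply: hN2; lia.
  have := pclose_mul pp (pclose_mul pp h1 h2) h3.
  by apply: pclose_le; lia.
- by apply: hN3; lia.
Qed.

End PadicNumbers.

Lemma prime_tP (p : prime_t) : prime (val p).
Proof. exact: valP. Qed.

Lemma finite_primes_le (d : nat) : finite_set [set p : prime_t | (val p <= d)%N].
Proof.
have -> : [set p : prime_t | (val p <= d)%N] = val @^-1` `I_d.+1.
  by apply/seteqP; split=> x /=; rewrite ltnS.
by apply: finite_preimage; [move=> x y _ _; apply: val_inj | apply: finite_II].
Qed.

Lemma finite_primes_seq (E : set prime_t) : finite_set E ->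
  exists L : seq nat, [/\ all prime L, uniq L & forall p, val p \in L <-> E p].
Proof.
move=> /finite_seqP[s sE]; exists (undup (map val s)); split.
- by apply/allP => n; rewrite mem_undup => /mapP[p _ ->]; apply: prime_tP.
- exact: undup_uniq.
move=> p; rewrite mem_undup sE /=; split=> [/mapP[p' p's /val_inj ->] //|].
by move=> ps; apply/mapP; exists p.
Qed.

Lemma finite_nonint_rat (q : rat) : finite_set [set p : prime_t | ~ pclose (val p) 0 q].
Proof.
apply: (sub_finite_set _ (finite_primes_le `|denq q|%N)) => p /= nq.
apply: dvdn_leq; first by rewrite absz_gt0 denq_neq0.
apply: contrapT => /negP nd; apply: nq; apply/(pclose0P (prime_tP p)).
exists (numq q), `|denq q|%N; split=> //.
by rewrite pmulrn abszE ger0_norm ?divq_num_den // ltW // denq_gt0.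
Qed.

Definition af0 : Af.
Proof.
refine (@MkAf (fun p => Qp0 (val p)) _).
apply: (sub_finite_set _ (@finite_set0 prime_t)) => p /= ni.
exact/ni/(Qp_int0 (prime_tP p)).
Defined.

Definition af_scale (q : rat) (a : Af) : Af.
Proof.
refine (@MkAf (fun p => Qp_scale (prime_tP p) q (af_comp a p)) _).
have fU := conj (af_restr a) (finite_nonint_rat q); rewrite -finite_setU in fU.
apply: (sub_finite_set _ fU) => p /= ni; apply: contrapT => /not_orP[ap qp]; apply: ni.
by apply: Qp_int_scale; apply: contrapT.
Defined.

Lemma af_basic_nbhd_open (c : Af) F k : finite_set F -> af_open (af_basic_nbhd c F k).
Proof.
move=> fF b cb; exists F, k; split=> // d bd p.
have [h1 h2] := cb p; have [h3 h4] := bd p.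
split=> Fp.
  exact: (Qp_near_trans (prime_tP p) (h1 Fp) (h3 Fp)).
exact: (Qp_near_trans (prime_tP p) (h2 Fp) (h4 Fp)).
Qed.

Lemma af_basic_nbhd_center (c : Af) F k : af_basic_nbhd c F k c.
Proof. by move=> p; split=> _; exact: (Qp_near_refl (prime_tP p)). Qed.

Lemma af_scale_approx_local (a c : Af) (K : prime_t -> int) :
  exists (t : prime_t -> rat) (M : prime_t -> int), forall p, af_comp a p <> Qp0 (val p) ->
    forall q, pclose (val p) (M p) (q - t p) ->
      Qp_near (K p) (af_comp c p) (Qp_scale (prime_tP p) q (af_comp a p)).
Proof.
pose good p (tM : rat * int) := af_comp a p <> Qp0 (val p) ->
  forall q, pclose (val p) tM.2 (q - tM.1) ->
    Qp_near (K p) (af_comp c p) (Qp_scale (prime_tP p) q (af_comp a p)).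
have [f hf] : {f : prime_t -> rat * int & forall p, good p (f p)}.
  apply: (@choice _ _ good) => p; have [a0|a0] := pselect (af_comp a p = Qp0 (val p)).
    by exists (0, 0).
  by have [t [M h]] := Qp_scale_approx (prime_tP p) (af_comp c p) (K p) a0; exists (t, M) => _.
by exists (fun p => (f p).1), (fun p => (f p).2).
Qed.

Lemma af_orbit_approx (a c : Af) F k : zero_set a `<=` zero_set c -> finite_set F ->
  exists q : rat, 0 < q /\ af_basic_nbhd c F k (af_scale q a).
Proof.
move=> zac fF.
pose nonint (b : Af) := [set p | ~ Qp_int (af_comp b p)].
set E := F `|` nonint a `|` nonint c.
have fE : finite_set E by rewrite !finite_setU; do !split=> //; apply: af_restr.
have [L [primeL uniqL LE]] := finite_primes_seq fE.
pose K p := if pselect (F p) then k p else 0.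
have [t [M tM]] := af_scale_approx_local a c K.
pose extend T (f : prime_t -> T) x0 n := oapp f x0 (insub n).
have [q [q0 [qL qnotL]]] :=
  weak_approx_pos (extend _ t 0) (extend _ M 0) primeL uniqL.
exists q; split=> // p.
have pp := prime_tP p.
have nearE : E p -> Qp_near (K p) (af_comp c p) (af_comp (af_scale q a) p).
  move=> Ep; have [a0|a0] := pselect (af_comp a p = Qp0 (val p)).
    by rewrite /= a0 (zac p a0) Qp_scale0; apply: Qp_near_refl.
  by apply: tM => //; have := qL _ ((LE p).2 Ep); rewrite /extend valK.
have [Ep|nEp] := pselect (E p).
  by have := nearE Ep; rewrite /K; case: pselect => Fp near; split=> // ?.
(* Outside [E], both [a_p] and [c_p] are integral and [q] is [p]-integral. *)
have /(Qp_intP pp (Qp_repr_set _)) ia : Qp_int (af_comp a p).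
  by apply: contrapT => h; apply: nEp; left; right.
have /(Qp_intP pp (Qp_repr_set _)) ic : Qp_int (af_comp c p).
  by apply: contrapT => h; apply: nEp; right.
have hq : pclose (val p) 0 q by apply: qnotL => //; apply/negP => /LE.
split=> [Fp|_]; first by exfalso; apply: nEp; do 2!left.
apply/(Qp_nearP pp 0 (Qp_repr_set _) (Qp_scale_set pp q (Qp_repr_set _))).
apply: (ev_close_sub pp) ic.
by have := ev_close_scale pp hq ia; rewrite add0r.
Qed.

Lemma af_orbit_closureE (a c : Af) :
  af_closure (af_orbit a) c <-> zero_set a `<=` zero_set c.
Proof.
split=> [ac p ap | zac O oO Oc].
  apply: contrapT => cp; have [k hk] := Qp_neq0_nbhd (prime_tP p) cp.
  have [d [cd [r [_ ad]]]] := ac _ (@af_basic_nbhd_open c _ (fun=> k) (finite_set1 p))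
    (@af_basic_nbhd_center c [set p] (fun=> k)).
  apply: (hk (af_comp d p)); first exact: (cd p).1.
  by move: (ad p); rewrite ap; apply: (Qp_scale_rel0 (prime_tP p)).
have [F [k [fF sub]]] := oO c Oc.
have [q [q0 hq]] := af_orbit_approx k zac fF.
exists (af_scale q a); split; first exact: sub.
exists q^-1; split; first by rewrite invr_gt0.
by move=> p; rewrite invrK; apply: Qp_scale_relE.
Qed.

Lemma quasi_orbit_relE (a b : Af) : quasi_orbit_rel a b <-> zero_set a = zero_set b.
Proof.
split=> [e | e]; last first.
  by apply/funext => c; apply/propext; rewrite !af_orbit_closureE e.
apply/seteqP; split; apply/af_orbit_closureE; [rewrite e | rewrite -e];
  exact/af_orbit_closureE.
Qed.

Lemma qos_ext (u v : QOS) : qos_set u = qos_set v -> u = v.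
Proof.
case: u v => [su hu] [sv hv] /= e; subst sv.
by congr MkQOS; apply: Prop_irrelevance.
Qed.

Definition qrep (u : QOS) : Af := projT1 (cid (qos_ax u)).

Lemma qrepE (u : QOS) : qos_set u = [set b | quasi_orbit_rel (qrep u) b].
Proof. exact: projT2 (cid (qos_ax u)). Qed.

Lemma qclass_qrep (u : QOS) : qclass (qrep u) = u.
Proof. by apply: qos_ext; rewrite [RHS]qrepE. Qed.

Lemma qclass_eq (a b : Af) : zero_set a = zero_set b -> qclass a = qclass b.
Proof.
move=> /quasi_orbit_relE e; apply: qos_ext; apply/seteqP.
by split=> c; rewrite /= /quasi_orbit_rel e.
Qed.

Definition qzero_set (u : QOS) : set prime_t := zero_set (qrep u).

Lemma qzero_set_qclass (a : Af) : qzero_set (qclass a) = zero_set a.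
Proof.
have : qos_set (qclass a) (qrep (qclass a)) by rewrite qrepE.
by move=> /quasi_orbit_relE.
Qed.

(* Off [T], a zero component of [a] is replaced by [p ^ |k p|], which is
   nonzero yet within [p ^ k p] of [0]. *)
Definition af_with_zeros_comp (a : Af) (T : set prime_t) (k : prime_t -> int)
    (p : prime_t) : Qp (val p) :=
  if pselect (T p) then Qp0 (val p)
  else if pselect (af_comp a p = Qp0 (val p)) then Qp_const (val p) ((val p)%:R ^+ `|k p|)
  else af_comp a p.

Definition af_with_zeros (a : Af) (T : set prime_t) (k : prime_t -> int) : Af.
Proof.
refine (@MkAf (af_with_zeros_comp a T k) _).
apply: (sub_finite_set _ (af_restr a)) => p /= ni; apply: contrapT => ia; apply: ni.
have pp := prime_tP p; rewrite /af_with_zeros_comp.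
case: pselect => [Tp|nTp]; first exact: Qp_int0.
case: pselect => [a0|na0]; last exact: contrapT.
exact/Qp_int_const/pclose0_prime_expn.
Defined.

Lemma zero_set_af_with_zeros (a : Af) T k : zero_set (af_with_zeros a T k) = T.
Proof.
apply/seteqP; split=> p; rewrite /zero_set /= /af_with_zeros_comp.
  case: pselect => //= nTp; case: pselect => //= a0 e; exfalso.
  apply: (Qp_const_neq0 (prime_tP p) _ e).
  by rewrite expf_neq0 // prime_natr_neq0 // prime_tP.
by case: pselect.
Qed.

Lemma af_with_zeros_nbhd (a : Af) F k (T : set prime_t) :
  T `&` [set p | (F p \/ ~ Qp_int (af_comp a p)) /\ ~ zero_set a p] = set0 ->
  af_basic_nbhd a F k (af_with_zeros a T k).
Proof.
move=> disj p; have pp := prime_tP p; rewrite /= /af_with_zeros_comp.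
case: (pselect (T p)) => [Tp|nTp] /=.
  have [za|nza] := pselect (zero_set a p).
    by rewrite /zero_set /= in za; rewrite za; split=> _; apply: (Qp_near_refl pp).
  have nG : ~ ((F p \/ ~ Qp_int (af_comp a p)) /\ ~ zero_set a p).
    by move=> Gp; have : set0 p by rewrite -disj; split.
  split=> [Fp|_]; first by exfalso; apply: nG; split; [left|].
  by apply: (Qp_near_sym pp); apply: contrapT => ni; apply: nG; split=> //; right.
case: (pselect (af_comp a p = _)) => [a0|na0] /=; last by split=> _; apply: (Qp_near_refl pp).
rewrite a0; split=> _; apply: (Qp_near0_const pp).
  by apply: (pclose_le (k := `|k p|%:Z)); [lia | apply: pclose_prime_expz].
exact: pclose0_prime_expn.
Qed.

Lemma af_nbhd_zero_set (a : Af) (F : set prime_t) :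
  exists k, forall b, af_basic_nbhd a F k b -> zero_set b `&` F `<=` zero_set a.
Proof.
pose sep p kp := af_comp a p <> Qp0 (val p) ->
  forall b, Qp_near kp (af_comp a p) b -> b <> Qp0 (val p).
have [k hk] : {k : prime_t -> int & forall p, sep p (k p)}.
  apply: (@choice _ _ sep) => p; have [a0|a0] := pselect (af_comp a p = Qp0 (val p)).
    by exists 0 => /(_ a0).
  by have [kp hkp] := Qp_neq0_nbhd (prime_tP p) a0; exists kp => _.
exists k => b ab p [bp Fp]; apply: contrapT => ap.
exact: (hk p ap _ ((ab p).1 Fp) bp).
Qed.

Lemma qzero_set_bij : bijective qzero_set.
Proof.
exists (fun T => qclass (af_with_zeros af0 T (fun=> 0))) => [u | T].
  by rewrite -[RHS]qclass_qrep; apply: qclass_eq; rewrite zero_set_af_with_zeros.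
by rewrite qzero_set_qclass zero_set_af_with_zeros.
Qed.

Lemma qzero_set_continuous (V : set (set prime_t)) :
  pc_open V -> qos_open (qzero_set @^-1` V).
Proof.
move=> oV a /=; rewrite qzero_set_qclass => Va.
have [G [fG [aG VG]]] := oV _ Va; have [k hk] := af_nbhd_zero_set a G.
exists G, k; split=> // b /hk bG /=; rewrite qzero_set_qclass; apply: VG.
by apply/seteqP; split=> // p [bp Gp]; rewrite -aG; split=> //; apply: bG.
Qed.

Lemma qzero_set_open (U : set QOS) : qos_open U -> pc_open (qzero_set @` U).
Proof.
move=> oU _ [u Uu <-]; set a := qrep u.
have [F [k [fF sub]]] : exists F k, finite_set F /\
    af_basic_nbhd a F k `<=` [set b | U (qclass b)].
  by apply: oU; rewrite /= qclass_qrep.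
(* Outside this set, [a_p] is zero or an integral component that a point of
   the neighbourhood may replace by [0]. *)
exists [set p | (F p \/ ~ Qp_int (af_comp a p)) /\ ~ zero_set a p]; split; [|split].
- have fU := conj fF (af_restr a); rewrite -finite_setU in fU.
  by apply: (sub_finite_set _ fU) => p [[Fp|ni] _]; [left | right].
- by apply/seteqP; split=> // p [ap [_ nap]].
move=> T disj; exists (qclass (af_with_zeros a T k)).
  exact/sub/af_with_zeros_nbhd.
by rewrite qzero_set_qclass zero_set_af_with_zeros.
Qed.

Theorem proposition2p4 :
  (forall a b : Af, quasi_orbit_rel a b -> zero_set a = zero_set b) /\
  exists f : QOS -> set prime_t,
    (forall a : Af, f (qclass a) = zero_set a) /\
    bijective f /\
    (forall V : set (set prime_t), pc_open V -> qos_open (f @^-1` V)) /\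
    (forall U : set QOS, qos_open U -> pc_open (f @` U)).
Proof.
split=> [a b /quasi_orbit_relE // |].
exists qzero_set; split; first exact: qzero_set_qclass.
split; first exact: qzero_set_bij.
by split; [apply: qzero_set_continuous | apply: qzero_set_open].
Qed.
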